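(* If a deterministic KAT automaton is $k$-dense, then it has at least $k$ states.
   Context: Atoms $\mathsf{At}_T=2^T$. Deterministic KAT automaton over $(\Sigma,T)$: $A=(Q,\delta,\iota)$, $Q$ finite set of states, $\delta:Q\times\mathsf{At}_T\to\{\mathsf{accept},\mathsf{reject}\}+\Sigma\times Q$, $\iota:\mathsf{At}_T\to\{\mathsf{accept},\mathsf{reject}\}+\Sigma\times Q$. Write $q\xrightarrow{\alpha\mid p}_Aq'$ for $\delta(q,\alpha)=(p,q')$; $q$ accepts $\alpha$ if $\delta(q,\alpha)=\mathsf{accept}$. $A$ is $k$-dense if there exist non-empty subsets $S_1,\dots,S_k\subseteq Q$, distinct atoms $\alpha_1,\dots,\alpha_k\in\mathsf{At}_T$ and, for all $1\le i,j\le k$ and $q\in S_i$, an action $p_{qj}\in\Sigma$, such that for all $i,j,m\le k$: (1) if $q\in S_i$ then $q$ accepts $\alpha_i$; (2) if $i\ne j$ and $q\in S_i$, there is $q'\in S_j$ with $q\xrightarrow{\alpha_j\mid p_{qj}}_Aq'$; (3) if $q\in S_i$ and $q'\in S_j$ with $p_{qm}=p_{q'm}$, then $i=j$. *)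

From mathcomp Require Import all_boot.
Set Implicit Arguments. Unset Strict Implicit. Unset Printing Implicit Defensive.

(* Atoms At_T = 2^T, represented as {set T} for a finite set T of primitive tests. *)
Definition atom (T : finType) := {set T}.

Inductive kat_out (Sigma Q : Type) :=
| Accept
| Reject
| Step of Sigma & Q.
Arguments Accept {Sigma Q}.
Arguments Reject {Sigma Q}.

Record kat_automaton (Sigma : Type) (T : finType) := KatAutomaton {
  kstate : finType;
  kdelta : kstate -> atom T -> kat_out Sigma kstate;
  kiota  : atom T -> kat_out Sigma kstate
}.

(* k-density, transcribed literally.  Indices 1..k are 'I_k; p_{qj} is given
   by a function p : 'I_k -> Q -> 'I_k -> Sigma, p i q j being meaningful for q \in S_i. *)
Definition k_dense (Sigma : Type) (T : finType) (A : kat_automaton Sigma T) (k : nat) : Prop :=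
  exists (S : 'I_k -> {set kstate A}) (alpha : 'I_k -> atom T)
         (p : 'I_k -> kstate A -> 'I_k -> Sigma),
    (forall i, S i != set0) /\
    injective alpha /\
    (forall i q, q \in S i -> kdelta q (alpha i) = Accept) /\
    (forall i j q, i != j -> q \in S i ->
        exists2 q', q' \in S j & kdelta q (alpha j) = Step (p i q j) q') /\
    (forall i j m q q', q \in S i -> q' \in S j -> p i q m = p j q' m -> i = j).

From mathcomp Require Import all_boot.

(* The witness sets S_1, ..., S_k of k-density are nonempty and pairwise
   disjoint: a state of S_i accepts alpha_i, whereas a state of S_j (j <> i)
   takes a step on alpha_i.  Choosing one state from each S_i therefore gives
   k distinct states. *)

Lemma card_le_of_nonempty_disjoint (I T : finType) (S : I -> {set T}) :
  (forall i, S i != set0) ->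
  (forall i j x, x \in S i -> x \in S j -> i = j) ->
  #|I| <= #|T|.
Proof.
move=> S_neq0 S_disj.
pose rep i := xchoose (set0Pn _ (S_neq0 i)).
have rep_in i : rep i \in S i by exact: xchooseP.
have rep_inj : injective rep.
  by move=> i j eq_rep; apply: (S_disj _ _ (rep i)); rewrite // eq_rep.
exact: leq_card rep_inj.
Qed.

Lemma k_dense_disjoint_classes (Sigma : Type) (T : finType)
    (A : kat_automaton Sigma T) (k : nat) :
  k_dense A k ->
  exists S : 'I_k -> {set kstate A},
    (forall i, S i != set0) /\
    (forall i j q, q \in S i -> q \in S j -> i = j).
Proof.
move=> [S [alpha [p [S_neq0 [_ [S_accept [S_step _]]]]]]].
exists S; split=> // i j q q_i q_j; apply/eqP/negP => /negP neq_ij.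
have [q' _ step_j] := S_step i j q neq_ij q_i.
by rewrite S_accept in step_j.
Qed.

Theorem lemma6p18 (Sigma : Type) (T : finType) (A : kat_automaton Sigma T) (k : nat) :
  k_dense A k -> k <= #|kstate A|.
Proof.
move=> /k_dense_disjoint_classes [S [S_neq0 S_disj]].
by rewrite -[k]card_ord; exact: card_le_of_nonempty_disjoint S_neq0 S_disj.
Qed.
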